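(* For all $\lambda\in(0,1)\setminus\{\frac12\}$, all $x\in\mathbb{R}\setminus\mathbb{Z}$ and all integers $m\ge2$, $H(\lambda,x,m)\neq0$.
   Context: The doubly infinite Lerch zeta function is $H(\lambda,x,m)=\sum_{n\in\mathbb{Z}}\dfrac{e^{2\pi i\lambda n}}{(n-x)^m}$ for $\lambda\in[0,1)$, $x\in\mathbb{C}\setminus\mathbb{Z}$, $m>1$. *)

From Stdlib Require Import Reals ZArith.
From Coquelicot Require Import Coquelicot.
Open Scope R_scope.

Definition cexpi (t : R) : C := (cos t, sin t).

Definition lerch_term (lam x : R) (m : nat) (n : Z) : C :=
  Cdiv (cexpi (2 * PI * lam * IZR n)) (RtoC ((IZR n - x) ^ m)).

Fixpoint lerch_psum (lam x : R) (m : nat) (N : nat) : C :=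
  match N with
  | O => lerch_term lam x m 0%Z
  | S k => Cplus (Cplus (lerch_psum lam x m k) (lerch_term lam x m (Z.of_nat (S k))))
                 (lerch_term lam x m (- Z.of_nat (S k))%Z)
  end.

(** [is_H lam x m L] : the doubly infinite series
    H(lam,x,m) = sum_{n in Z} e^{2 pi i lam n}/(n-x)^m converges to L
    (as the limit of its symmetric partial sums; for m >= 2 the series is
    absolutely convergent, so this is the value of H). *)
Definition is_H (lam x : R) (m : nat) (L : C) : Prop :=
  filterlim (lerch_psum lam x m) eventually (locally L).

From Stdlib Require Import Reals ZArith Lra Lia.
From Coquelicot Require Import Coquelicot.
Open Scope R_scope.

(* Write x = k + y with 0 < y < 1 and phi = pi lam.  If H vanished, so would every
   real part Re(e^{-i theta} H).  For a suitable theta, pairing the terms n = k + 1 + j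
   and n = k - j turns this real part into sum_j c_j A_j with the positive decreasing
   weights A_j = (j + 1 - y)^{-m} + (j + y)^{-m}, where c_j = cos((2j+1) phi) if m is
   even and c_j = sin((2j+1) phi) if m is odd.  Since
   sin phi * sum_{j<=N} sin((2j+1) phi) = sin((N+1) phi)^2 >= 0, Abel summation
   bounds the sine series below by sin phi (A_0 - A_1) > 0.  The cosine sum vanishes
   at phi = pi/2, and its phi-derivative is minus a sine series with the weights
   (2j+1) A_j, which still decrease because m >= 2; the mean value theorem then keeps
   it away from 0 on either side of pi/2. *)

Fixpoint zsum_sym (g : Z -> R) (N : nat) : R :=
  match N with
  | O => g 0%Z
  | S k => zsum_sym g k + g (Z.of_nat (S k)) + g (- Z.of_nat (S k))%Z
  end.

Definition is_zseries (g : Z -> R) (l : R) : Prop :=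
  exists a b : R, is_series (fun n => g (Z.of_nat n)) a /\
                  is_series (fun n => g (- Z.of_nat (S n))%Z) b /\ l = a + b.

Lemma is_zseries_ext (f g : Z -> R) (l : R) :
  (forall j, f j = g j) -> is_zseries f l -> is_zseries g l.
Proof.
  intros E (a & b & Ha & Hb & ->). exists a, b.
  split; [|split; [|reflexivity]]; (eapply is_series_ext; [intros n; apply E|]); assumption.
Qed.

Lemma is_zseries_lin (f g : Z -> R) (lf lg u v : R) :
  is_zseries f lf -> is_zseries g lg ->
  is_zseries (fun j => u * f j + v * g j) (u * lf + v * lg).
Proof.
  intros (a & b & Ha & Hb & ->) (c & d & Hc & Hd & ->).
  exists (u * a + v * c), (u * b + v * d). split; [|split; [|ring]].
  - exact (is_series_plus _ _ _ _ (is_series_scal_l u _ _ Ha) (is_series_scal_l v _ _ Hc)).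
  - exact (is_series_plus _ _ _ _ (is_series_scal_l u _ _ Hb) (is_series_scal_l v _ _ Hd)).
Qed.

Lemma is_zseries_reflect (g : Z -> R) (l : R) :
  is_zseries g l -> is_zseries (fun j => g (- j - 1)%Z) l.
Proof.
  intros (a & b & Ha & Hb & ->). exists b, a. split; [|split; [|ring]].
  - eapply is_series_ext; [|exact Hb]. intros n; cbv beta; f_equal; lia.
  - eapply is_series_ext; [|exact Ha]. intros n; cbv beta; f_equal; lia.
Qed.

Lemma is_zseries_succ (g : Z -> R) (l : R) :
  is_zseries g l -> is_zseries (fun j => g (j + 1)%Z) l.
Proof.
  intros (a & b & Ha & Hb & ->). exists (a - g 0%Z), (b + g 0%Z).
  split; [|split; [|ring]].
  - apply is_series_ext with (fun n => g (Z.of_nat (S n))); [intros n; f_equal; lia|].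
    apply (is_series_incr_1 (fun n => g (Z.of_nat n))).
    cbn. now replace (a - g 0%Z + g 0%Z) with a by ring.
  - apply is_series_ext with (fun n => g (- Z.of_nat n)%Z); [intros n; f_equal; lia|].
    apply is_series_decr_1.
    cbn. now replace (b + g 0%Z + - g 0%Z) with b by ring.
Qed.

Lemma is_zseries_pred (g : Z -> R) (l : R) :
  is_zseries g l -> is_zseries (fun j => g (j - 1)%Z) l.
Proof.
  intros H. apply is_zseries_reflect, is_zseries_succ, is_zseries_reflect in H.
  eapply is_zseries_ext; [|exact H]. intros j; cbv beta; f_equal; lia.
Qed.

Lemma is_zseries_shift (g : Z -> R) (l : R) (k : Z) :
  is_zseries g l -> is_zseries (fun j => g (j + k)%Z) l.
Proof.
  revert g. induction k as [|k IH|k IH] using Z.peano_ind; intros g Hg.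
  - eapply is_zseries_ext; [|exact Hg]. intros j; f_equal; lia.
  - eapply is_zseries_ext; [|exact (is_zseries_succ _ _ (IH g Hg))].
    intros j; cbv beta; f_equal; lia.
  - eapply is_zseries_ext; [|exact (is_zseries_pred _ _ (IH g Hg))].
    intros j; cbv beta; f_equal; lia.
Qed.

Lemma is_zseries_pairs_at (g : Z -> R) (l : R) (k : Z) :
  is_zseries g l ->
  is_series (fun n => g (k + Z.of_nat (S n))%Z + g (k - Z.of_nat n)%Z) l.
Proof.
  intros H.
  destruct (is_zseries_succ _ _ (is_zseries_shift _ _ k H)) as (a & b & Ha & Hb & ->).
  apply (is_series_plus (fun n => g (k + Z.of_nat (S n))%Z) (fun n => g (k - Z.of_nat n)%Z)).
  - eapply is_series_ext; [|exact Ha]. intros n; cbv beta; f_equal; lia.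
  - eapply is_series_ext; [|exact Hb]. intros n; cbv beta; f_equal; lia.
Qed.

Lemma zsum_sym_tails (g : Z -> R) (N : nat) :
  zsum_sym g (S N) =
  sum_n (fun n => g (Z.of_nat n)) (S N) + sum_n (fun n => g (- Z.of_nat (S n))%Z) N.
Proof.
  induction N as [|N IH].
  - simpl. rewrite !sum_Sn, !sum_O. unfold plus; simpl. ring.
  - change (zsum_sym g (S (S N))) with
      (zsum_sym g (S N) + g (Z.of_nat (S (S N))) + g (- Z.of_nat (S (S N)))%Z).
    rewrite IH, !sum_Sn. unfold plus; simpl. ring.
Qed.

Lemma is_lim_seq_zsum_sym (g : Z -> R) (l : R) :
  is_zseries g l -> is_lim_seq (zsum_sym g) l.
Proof.
  intros (a & b & Ha & Hb & ->). apply is_lim_seq_incr_1.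
  eapply is_lim_seq_ext; [intros N; symmetry; apply zsum_sym_tails|].
  apply is_lim_seq_plus'; [apply (is_lim_seq_incr_1 (sum_n _))|]; assumption.
Qed.

Lemma int_frac_decomposition (x : R) :
  (forall k : Z, x <> IZR k) -> exists (k : Z) (y : R), x = IZR k + y /\ 0 < y < 1.
Proof.
  intros Hx. exists (Int_part x), (frac_part x).
  split; [apply Rplus_Int_part_frac_part|].
  pose proof (Hx (Int_part x)) as Hne. destruct (base_Int_part x) as [Hle Hgt].
  unfold frac_part. split; [|lra].
  destruct (Rle_lt_or_eq_dec _ _ Hle); [lra | congruence].
Qed.

Lemma is_series_inv_telescoping :
  is_series (fun n => / (INR n + 1) - / (INR n + 2)) 1.
Proof.
  assert (Hsum : forall N,
             sum_n (fun n => / (INR n + 1) - / (INR n + 2)) N = 1 - / (INR N + 2)).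
  { induction N as [|N IH].
    - rewrite sum_O. simpl. field.
    - rewrite sum_Sn, IH, S_INR. unfold plus; cbn -[INR].
      pose proof (pos_INR N). field; lra. }
  assert (Hlim : is_lim_seq (fun N => 1 - / (INR N + 2)) (1 - 0)).
  { apply (is_lim_seq_minus' (fun _ => 1)); [apply is_lim_seq_const|].
    replace (Finite 0) with (Rbar_inv p_infty) by reflexivity.
    apply is_lim_seq_inv; [|discriminate].
    eapply is_lim_seq_le_p_loc; [|apply is_lim_seq_INR]. exists O; intros; lra. }
  rewrite Rminus_0_r in Hlim.
  unfold is_series. eapply filterlim_ext; [intros N; symmetry; apply Hsum|]. exact Hlim.
Qed.

Lemma ex_series_inv_sq : ex_series (fun n => / (INR n + 1) ^ 2).
Proof.
  apply (ex_series_le (V := R_CompleteNormedModule) _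
           (fun n => 2 * (/ (INR n + 1) - / (INR n + 2)))).
  - intros n. change norm with Rabs. pose proof (pos_INR n).
    assert (0 < (INR n + 1) ^ 2) by (apply pow_lt; lra).
    rewrite Rabs_pos_eq by (left; apply Rinv_0_lt_compat; lra).
    replace (2 * (/ (INR n + 1) - / (INR n + 2)))
      with (/ ((INR n + 1) * (INR n + 2) / 2)) by (field; lra).
    apply Rinv_le_contravar; [apply Rmult_lt_0_compat|]; nra.
  - apply (ex_series_scal_l (V := R_NormedModule)). exists 1. apply is_series_inv_telescoping.
Qed.

Lemma ex_series_inv_pow_shift (c : R) (m : nat) :
  0 < c -> (2 <= m)%nat -> ex_series (fun n => / (INR n + c) ^ m).
Proof.
  intros Hc Hm. set (d := Rmin c 1).
  assert (Hd : 0 < d <= 1) by (unfold d, Rmin; destruct Rle_dec; lra).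
  assert (Hdm : 0 < d ^ m) by (apply pow_lt; lra).
  apply (ex_series_le (V := R_CompleteNormedModule) _ (fun n => / d ^ m * / (INR n + 1) ^ 2)).
  - intros n. change norm with Rabs. pose proof (pos_INR n).
    assert (Hlin : d * (INR n + 1) <= INR n + c).
    { assert (d * INR n <= INR n)
        by (rewrite <- (Rmult_1_l (INR n)) at 2; apply Rmult_le_compat_r; lra).
      assert (d <= c) by apply Rmin_l. lra. }
    assert (Hsq : (INR n + 1) ^ 2 <= (INR n + 1) ^ m) by (apply Rle_pow; [lra | exact Hm]).
    assert (Hpow : d ^ m * (INR n + 1) ^ m <= (INR n + c) ^ m).
    { rewrite <- Rpow_mult_distr. apply pow_incr. nra. }
    rewrite Rabs_pos_eq by (left; apply Rinv_0_lt_compat, pow_lt; lra).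
    rewrite <- Rinv_mult. apply Rinv_le_contravar.
    + apply Rmult_lt_0_compat; [lra | apply pow_lt; lra].
    + apply Rle_trans with (d ^ m * (INR n + 1) ^ m); [apply Rmult_le_compat_l|]; lra.
  - apply (ex_series_scal_l (V := R_NormedModule)), ex_series_inv_sq.
Qed.

Lemma ex_zseries_dominated (g : Z -> R) (x : R) (m : nat) :
  (forall k : Z, x <> IZR k) -> (2 <= m)%nat ->
  (forall n, Rabs (g n) <= / Rabs (IZR n - x) ^ m) -> exists l, is_zseries g l.
Proof.
  intros Hx Hm Hg. destruct (int_frac_decomposition x Hx) as (k & y & -> & Hy).
  set (h := fun j => g (j + k)%Z).
  assert (Hpos : ex_series (fun n => h (Z.of_nat n))).
  { apply ex_series_incr_1,
      (ex_series_le (V := R_CompleteNormedModule) _ (fun n => / (INR n + (1 - y)) ^ m)).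
    - intros n. change norm with Rabs. pose proof (pos_INR n). unfold h.
      eapply Rle_trans; [apply Hg | right].
      rewrite plus_IZR, <- INR_IZR_INZ, S_INR, Rabs_pos_eq by lra. f_equal. f_equal. ring.
    - apply ex_series_inv_pow_shift; [lra | exact Hm]. }
  assert (Hneg : ex_series (fun n => h (- Z.of_nat (S n))%Z)).
  { apply (ex_series_le (V := R_CompleteNormedModule) _ (fun n => / (INR n + (1 + y)) ^ m)).
    - intros n. change norm with Rabs. pose proof (pos_INR n). unfold h.
      eapply Rle_trans; [apply Hg | right].
      rewrite plus_IZR, opp_IZR, <- INR_IZR_INZ, S_INR, Rabs_left by lra. f_equal. f_equal. ring.
    - apply ex_series_inv_pow_shift; [lra | exact Hm]. }
  destruct Hpos as [a Ha], Hneg as [b Hb].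
  exists (a + b).
  assert (Hh : is_zseries h (a + b)) by (exists a, b; auto).
  eapply is_zseries_ext; [|exact (is_zseries_shift h _ (- k) Hh)].
  intros j; unfold h; cbv beta; f_equal; lia.
Qed.

Lemma is_lim_seq_ge_const (u : nat -> R) (l c : R) :
  is_lim_seq u l -> (forall n, c <= u n) -> c <= l.
Proof.
  intros Hu Hc. exact (is_lim_seq_le (fun _ => c) u c l Hc (is_lim_seq_const c) Hu).
Qed.

Lemma is_lim_seq_sum_f_R0 (a : nat -> R) (l : R) :
  is_series a l -> is_lim_seq (sum_f_R0 a) l.
Proof.
  intros Ha. eapply is_lim_seq_ext; [intros N; apply sum_n_Reals | exact Ha].
Qed.

Lemma sum_mul_nonincreasing_ge (c B : nat -> R) :
  (forall N, 0 <= sum_f_R0 c N) -> (forall n, 0 <= B n) -> (forall n, B (S n) <= B n) ->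
  forall N, c 0%nat * (B 0%nat - B 1%nat) <= sum_f_R0 (fun n => c n * B n) N.
Proof.
  intros Hc HB Hdecr.
  assert (Abel : forall N, c 0%nat * (B 0%nat - B 1%nat) + sum_f_R0 c N * B (S N)
                           <= sum_f_R0 (fun n => c n * B n) N).
  { induction N as [|N IH]; simpl; [nra|].
    specialize (Hc (S N)). specialize (Hdecr (S N)). simpl in Hc. nra. }
  intros N. specialize (Abel N). specialize (Hc N). specialize (HB (S N)). nra.
Qed.

Lemma sin_plus_mul_sin_minus (a b : R) : sin (a + b) * sin (a - b) = sin a ^ 2 - sin b ^ 2.
Proof.
  rewrite sin_plus, sin_minus.
  pose proof (sin2_cos2 a) as Ha. pose proof (sin2_cos2 b) as Hb. unfold Rsqr in *. nra.
Qed.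

Lemma sin_mul_sum_sin_odd (phi : R) (N : nat) :
  sin phi * sum_f_R0 (fun n => sin ((2 * INR n + 1) * phi)) N = sin ((INR N + 1) * phi) ^ 2.
Proof.
  induction N as [|N IH].
  - simpl. replace ((2 * 0 + 1) * phi) with phi by ring.
    replace ((0 + 1) * phi) with phi by ring. ring.
  - rewrite tech5, Rmult_plus_distr_l, IH, S_INR.
    replace ((2 * (INR N + 1) + 1) * phi) with ((INR N + 1 + 1) * phi + (INR N + 1) * phi) by ring.
    replace (sin phi) with (sin ((INR N + 1 + 1) * phi - (INR N + 1) * phi)) by (f_equal; ring).
    rewrite (Rmult_comm (sin (_ - _))), sin_plus_mul_sin_minus. ring.
Qed.

Lemma sum_sin_odd_weighted_ge (w : nat -> R) (phi : R) (N : nat) :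
  0 < sin phi -> (forall n, 0 <= w n) -> (forall n, w (S n) <= w n) ->
  sin phi * (w 0%nat - w 1%nat) <= sum_f_R0 (fun n => sin ((2 * INR n + 1) * phi) * w n) N.
Proof.
  intros Hs Hw Hdecr.
  replace (sin phi) with (sin ((2 * INR 0 + 1) * phi)) at 1 by (f_equal; simpl; ring).
  apply (sum_mul_nonincreasing_ge (fun n => sin ((2 * INR n + 1) * phi))); [|assumption..].
  intros K. apply (Rmult_le_reg_l (sin phi)); [exact Hs|].
  rewrite Rmult_0_r, sin_mul_sum_sin_odd. apply pow2_ge_0.
Qed.

Lemma is_series_sin_odd_weighted_pos (w : nat -> R) (phi l : R) :
  0 < phi < PI -> (forall n, 0 <= w n) -> (forall n, w (S n) < w n) ->
  is_series (fun n => sin ((2 * INR n + 1) * phi) * w n) l -> 0 < l.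
Proof.
  intros Hphi Hw Hdecr Hl.
  assert (Hs : 0 < sin phi) by (apply sin_gt_0; lra).
  assert (Hgap : 0 < sin phi * (w 0%nat - w 1%nat)) by (specialize (Hdecr 0%nat); nra).
  enough (sin phi * (w 0%nat - w 1%nat) <= l) by lra.
  apply (is_lim_seq_ge_const _ _ _ (is_lim_seq_sum_f_R0 _ _ Hl)).
  intros N. apply sum_sin_odd_weighted_ge; [exact Hs | exact Hw | intros n; left; apply Hdecr].
Qed.

Definition odd_weight (w : nat -> R) (n : nat) : R := (2 * INR n + 1) * w n.

Definition cos_odd_sum (w : nat -> R) (N : nat) (phi : R) : R :=
  sum_f_R0 (fun n => cos ((2 * INR n + 1) * phi) * w n) N.

Lemma derivable_pt_lim_cos_odd_sum (w : nat -> R) (N : nat) (phi : R) :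
  derivable_pt_lim (cos_odd_sum w N) phi
    (- sum_f_R0 (fun n => sin ((2 * INR n + 1) * phi) * odd_weight w n) N).
Proof.
  induction N as [|N IH].
  - unfold cos_odd_sum, odd_weight; simpl. apply is_derive_Reals.
    auto_derive; [exact I|]. ring.
  - apply (derivable_pt_lim_ext
             (fun t => cos_odd_sum w N t + cos ((2 * INR (S N) + 1) * t) * w (S N)));
      [reflexivity|].
    rewrite tech5, Ropp_plus_distr. apply derivable_pt_lim_plus; [exact IH|].
    apply is_derive_Reals. unfold odd_weight.
    generalize (2 * INR (S N) + 1) (w (S N)); intros c a.
    auto_derive; [exact I|]. ring.
Qed.

Lemma cos_odd_sum_half (w : nat -> R) (N : nat) : cos_odd_sum w N (PI / 2) = 0.
Proof.
  apply sum_eq_R0. intros n _. rewrite cos_eq_0_1; [ring|].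
  exists (Z.of_nat n). rewrite <- INR_IZR_INZ. field.
Qed.

Lemma cos_odd_sum_decrease (w : nat -> R) (N : nat) (a b s : R) :
  a < b -> 0 < s -> (forall t, a <= t <= b -> s <= sin t) ->
  (forall n, 0 <= odd_weight w n) -> (forall n, odd_weight w (S n) <= odd_weight w n) ->
  cos_odd_sum w N b - cos_odd_sum w N a
  <= - s * (odd_weight w 0 - odd_weight w 1) * (b - a).
Proof.
  intros Hab Hs Hsin Hv Hdecr.
  destruct (MVT_cor2 (cos_odd_sum w N) _ a b Hab
              (fun t _ => derivable_pt_lim_cos_odd_sum w N t)) as (xi & -> & Hxi).
  assert (Hsxi : s <= sin xi) by (apply Hsin; lra).
  pose proof (sum_sin_odd_weighted_ge (odd_weight w) xi N ltac:(lra) Hv Hdecr) as Hsum.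
  assert (Hd : 0 <= odd_weight w 0 - odd_weight w 1) by (specialize (Hdecr 0%nat); lra).
  assert (s * (odd_weight w 0 - odd_weight w 1) <= sin xi * (odd_weight w 0 - odd_weight w 1))
    by (apply Rmult_le_compat_r; assumption).
  nra.
Qed.

Lemma is_series_cos_odd_weighted_neq0 (w : nat -> R) (phi l : R) :
  0 < phi < PI -> phi <> PI / 2 ->
  (forall n, 0 <= odd_weight w n) -> (forall n, odd_weight w (S n) < odd_weight w n) ->
  is_series (fun n => cos ((2 * INR n + 1) * phi) * w n) l -> l <> 0.
Proof.
  intros Hphi Hhalf Hv Hdecr Hl.
  assert (Hdecr' : forall n, odd_weight w (S n) <= odd_weight w n)
    by (intros n; left; apply Hdecr).
  set (d := odd_weight w 0 - odd_weight w 1).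
  assert (Hd : 0 < d) by (specialize (Hdecr 0%nat); unfold d; lra).
  assert (Hs : 0 < sin phi) by (apply sin_gt_0; lra).
  pose proof PI_RGT_0.
  set (e := PI / 2 - phi).
  (* Multiplying by e treats both sides of pi/2 at once. *)
  assert (Hbound : forall N, sin phi * d * e ^ 2 <= e * cos_odd_sum w N phi).
  { intros N. destruct (Rlt_or_le phi (PI / 2)) as [Hlt | Hge].
    - assert (Hsin : forall t, phi <= t <= PI / 2 -> sin phi <= sin t)
        by (intros t Ht; apply sin_incr_1; lra).
      pose proof (cos_odd_sum_decrease w N _ _ _ Hlt Hs Hsin Hv Hdecr') as Hmvt.
      rewrite cos_odd_sum_half in Hmvt. fold d e in Hmvt.
      assert (He : 0 < e) by (unfold e; lra). nra.
    - assert (Hgt : PI / 2 < phi) by lra.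
      assert (Hsin : forall t, PI / 2 <= t <= phi -> sin phi <= sin t)
        by (intros t Ht; apply sin_decr_1; lra).
      pose proof (cos_odd_sum_decrease w N _ _ _ Hgt Hs Hsin Hv Hdecr') as Hmvt.
      rewrite cos_odd_sum_half in Hmvt. fold d in Hmvt.
      replace (phi - PI / 2) with (- e) in Hmvt by (unfold e; ring).
      assert (He : e < 0) by (unfold e; lra). nra. }
  assert (Hlim : sin phi * d * e ^ 2 <= e * l).
  { apply (is_lim_seq_ge_const (fun N => e * cos_odd_sum w N phi)); [|exact Hbound].
    apply (is_lim_seq_scal_l _ e l), is_lim_seq_sum_f_R0, Hl. }
  assert (He : 0 < e ^ 2) by (apply pow2_gt_0; unfold e; lra).
  intros ->. assert (0 < sin phi * d) by (apply Rmult_lt_0_compat; assumption). nra.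
Qed.

Definition lerch_weight (y : R) (m n : nat) : R := / (INR n + (1 - y)) ^ m + / (INR n + y) ^ m.

Lemma inv_pow_shift_decr (c : R) (m n : nat) :
  0 < c -> (1 <= m)%nat -> / (INR (S n) + c) ^ m < / (INR n + c) ^ m.
Proof.
  intros Hc Hm. rewrite S_INR. pose proof (pos_INR n).
  apply Rinv_lt_contravar; [apply Rmult_lt_0_compat; apply pow_lt; lra|].
  destruct m as [|m]; [lia|]. simpl.
  assert ((INR n + c) ^ m <= (INR n + 1 + c) ^ m) by (apply pow_incr; lra).
  assert (0 < (INR n + c) ^ m) by (apply pow_lt; lra).
  nra.
Qed.

Lemma odd_weight_inv_pow_shift_decr (c : R) (m n : nat) :
  0 < c <= 1 -> (2 <= m)%nat ->
  (2 * INR (S n) + 1) * / (INR (S n) + c) ^ m < (2 * INR n + 1) * / (INR n + c) ^ m.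
Proof.
  intros Hc Hm. rewrite S_INR. pose proof (pos_INR n).
  set (u := INR n + c). replace (INR n + 1 + c) with (u + 1) by (unfold u; ring).
  assert (Hu : 0 < u <= INR n + 1) by (unfold u; lra).
  replace m with (2 + (m - 2))%nat by lia. rewrite !pow_add. set (k := (m - 2)%nat).
  assert (Hk : u ^ k <= (u + 1) ^ k) by (apply pow_incr; lra).
  assert (Hk0 : 0 < u ^ k) by (apply pow_lt; lra).
  (* The case m = 2 carries the inequality, thanks to u <= n + 1. *)
  assert (Hsq : (2 * (INR n + 1) + 1) * u ^ 2 < (2 * INR n + 1) * (u + 1) ^ 2) by nra.
  assert (0 < (u + 1) ^ 2 * (u + 1) ^ k) by (apply Rmult_lt_0_compat; apply pow_lt; lra).
  assert (0 < u ^ 2 * u ^ k) by (apply Rmult_lt_0_compat; apply pow_lt; lra).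
  apply (Rmult_lt_reg_r (((u + 1) ^ 2 * (u + 1) ^ k) * (u ^ 2 * u ^ k))); [nra|].
  field_simplify; [|lra..].
  assert (0 <= (2 * INR n + 1) * (u + 1) ^ 2) by (apply Rmult_le_pos; [lra | apply pow2_ge_0]).
  nra.
Qed.

Lemma lerch_weight_decr (y : R) (m n : nat) :
  0 < y < 1 -> (1 <= m)%nat -> lerch_weight y m (S n) < lerch_weight y m n.
Proof.
  intros Hy Hm. unfold lerch_weight.
  pose proof (inv_pow_shift_decr (1 - y) m n ltac:(lra) Hm).
  pose proof (inv_pow_shift_decr y m n ltac:(lra) Hm). lra.
Qed.

Lemma odd_weight_lerch_weight_decr (y : R) (m n : nat) :
  0 < y < 1 -> (2 <= m)%nat ->
  odd_weight (lerch_weight y m) (S n) < odd_weight (lerch_weight y m) n.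
Proof.
  intros Hy Hm. unfold odd_weight, lerch_weight. rewrite !Rmult_plus_distr_l.
  pose proof (odd_weight_inv_pow_shift_decr (1 - y) m n ltac:(lra) Hm).
  pose proof (odd_weight_inv_pow_shift_decr y m n ltac:(lra) Hm). lra.
Qed.

Lemma lerch_weight_nonneg (y : R) (m n : nat) : 0 < y < 1 -> 0 <= lerch_weight y m n.
Proof.
  intros Hy. pose proof (pos_INR n). unfold lerch_weight.
  apply Rplus_le_le_0_compat; left; apply Rinv_0_lt_compat, pow_lt; lra.
Qed.

Lemma odd_weight_nonneg (w : nat -> R) (n : nat) :
  (forall j, 0 <= w j) -> 0 <= odd_weight w n.
Proof.
  intros Hw. pose proof (pos_INR n). apply Rmult_le_pos; [lra | apply Hw].
Qed.

Lemma filterlim_C_pair (u v : nat -> R) (a b : R) :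
  is_lim_seq u a -> is_lim_seq v b ->
  filterlim (fun n => (u n, v n) : C) eventually (locally ((a, b) : C)).
Proof.
  intros Hu Hv P [eps HP].
  apply is_lim_seq_spec in Hu, Hv.
  destruct (Hu eps) as [Nu HNu], (Hv eps) as [Nv HNv].
  exists (max Nu Nv). intros n Hn. apply HP. split; [apply HNu | apply HNv]; lia.
Qed.

(* Real part of e^{-i theta} times the n-th term of H(lam, x, m). *)
Definition lerch_cos (lam x theta : R) (m : nat) (n : Z) : R :=
  cos (2 * PI * lam * IZR n - theta) / (IZR n - x) ^ m.

Lemma lerch_term_components (lam x : R) (m : nat) (n : Z) :
  IZR n - x <> 0 ->
  lerch_term lam x m n = (lerch_cos lam x 0 m n, lerch_cos lam x (PI / 2) m n).
Proof.
  intros Hn. assert (Hp : (IZR n - x) ^ m <> 0) by (apply pow_nonzero; exact Hn).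
  unfold lerch_term, lerch_cos, cexpi, Cdiv, Cmult, Cinv, RtoC; simpl.
  rewrite Rminus_0_r, cos_minus, cos_PI2, sin_PI2.
  apply injective_projections; simpl; field; exact Hp.
Qed.

Lemma lerch_psum_components (lam x : R) (m N : nat) :
  (forall k : Z, x <> IZR k) ->
  lerch_psum lam x m N =
  (zsum_sym (lerch_cos lam x 0 m) N, zsum_sym (lerch_cos lam x (PI / 2) m) N).
Proof.
  intros Hx. assert (Hn : forall n, IZR n - x <> 0) by (intros n E; apply (Hx n); lra).
  induction N as [|N IH]; simpl; rewrite ?IH, !lerch_term_components by auto; reflexivity.
Qed.

Lemma is_H_components (lam x : R) (m : nat) (a b : R) :
  (forall k : Z, x <> IZR k) ->
  is_zseries (lerch_cos lam x 0 m) a -> is_zseries (lerch_cos lam x (PI / 2) m) b ->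
  is_H lam x m (a, b).
Proof.
  intros Hx Ha Hb. unfold is_H.
  eapply filterlim_ext; [intros N; symmetry; apply lerch_psum_components, Hx|].
  apply filterlim_C_pair; apply is_lim_seq_zsum_sym; assumption.
Qed.

Lemma lerch_cos_rotate (lam x theta : R) (m : nat) (n : Z) :
  lerch_cos lam x theta m n =
  cos theta * lerch_cos lam x 0 m n + sin theta * lerch_cos lam x (PI / 2) m n.
Proof.
  unfold lerch_cos. rewrite !cos_minus, cos_0, sin_0, cos_PI2, sin_PI2. unfold Rdiv. ring.
Qed.

Lemma ex_zseries_lerch_cos (lam x theta : R) (m : nat) :
  (forall k : Z, x <> IZR k) -> (2 <= m)%nat ->
  exists l, is_zseries (lerch_cos lam x theta m) l.
Proof.
  intros Hx Hm. apply (ex_zseries_dominated _ x m Hx Hm). intros n.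
  assert (Hn : 0 < Rabs (IZR n - x)) by (apply Rabs_pos_lt; intros E; apply (Hx n); lra).
  unfold lerch_cos, Rdiv. rewrite Rabs_mult, Rabs_inv, <- RPow_abs.
  assert (0 < / Rabs (IZR n - x) ^ m) by (apply Rinv_0_lt_compat, pow_lt; exact Hn).
  pose proof (Rabs_pos (cos (2 * PI * lam * IZR n - theta))).
  assert (Rabs (cos (2 * PI * lam * IZR n - theta)) <= 1) by (apply Rabs_le, COS_bound).
  nra.
Qed.

Lemma lerch_cos_pairs (lam y beta : R) (k : Z) (m : nat) (l : R) :
  is_zseries (lerch_cos lam (IZR k + y) (2 * PI * lam * IZR k + PI * lam - beta) m) l ->
  is_series (fun n => cos ((2 * INR n + 1) * (PI * lam) + beta) / (INR n + (1 - y)) ^ m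
                    + cos (beta - (2 * INR n + 1) * (PI * lam)) / (- (INR n + y)) ^ m) l.
Proof.
  intros H. eapply is_series_ext; [|exact (is_zseries_pairs_at _ _ k H)].
  intros n. unfold lerch_cos. rewrite plus_IZR, minus_IZR, <- !INR_IZR_INZ, S_INR.
  f_equal; f_equal; f_equal; ring.
Qed.

Lemma pow_opp (a : R) (m : nat) : (- a) ^ m = (-1) ^ m * a ^ m.
Proof. rewrite <- Rpow_mult_distr. f_equal. ring. Qed.

Lemma cos_pair_even (t a b : R) (p : nat) :
  cos (t + 0) / a ^ (2 * p) + cos (0 - t) / (- b) ^ (2 * p)
  = cos t * (/ a ^ (2 * p) + / b ^ (2 * p)).
Proof.
  rewrite Rplus_0_r, Rminus_0_l, cos_neg, pow_opp, pow_1_even, Rmult_1_l. unfold Rdiv. ring.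
Qed.

Lemma cos_pair_odd (t a b : R) (p : nat) :
  cos (t + - (PI / 2)) / a ^ (2 * p + 1) + cos (- (PI / 2) - t) / (- b) ^ (2 * p + 1)
  = sin t * (/ a ^ (2 * p + 1) + / b ^ (2 * p + 1)).
Proof.
  replace (2 * p + 1)%nat with (S (2 * p)) by lia.
  rewrite cos_plus, cos_minus, cos_neg, sin_neg, cos_PI2, sin_PI2, pow_opp, pow_1_odd.
  replace (-1 * b ^ S (2 * p)) with (- b ^ S (2 * p)) by ring.
  unfold Rdiv. rewrite Rinv_opp. ring.
Qed.

Lemma is_series_lerch_even (lam y : R) (k : Z) (m : nat) (l : R) :
  Nat.Even m ->
  is_zseries (lerch_cos lam (IZR k + y) (2 * PI * lam * IZR k + PI * lam) m) l ->
  is_series (fun n => cos ((2 * INR n + 1) * (PI * lam)) * lerch_weight y m n) l.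
Proof.
  intros [p ->] H. rewrite <- (Rminus_0_r (_ + PI * lam)) in H.
  eapply is_series_ext; [|exact (lerch_cos_pairs _ _ _ _ _ _ H)].
  intros n. apply cos_pair_even.
Qed.

Lemma is_series_lerch_odd (lam y : R) (k : Z) (m : nat) (l : R) :
  Nat.Odd m ->
  is_zseries (lerch_cos lam (IZR k + y) (2 * PI * lam * IZR k + PI * lam + PI / 2) m) l ->
  is_series (fun n => sin ((2 * INR n + 1) * (PI * lam)) * lerch_weight y m n) l.
Proof.
  intros [p ->] H.
  replace (_ + PI * lam + PI / 2)
    with (2 * PI * lam * IZR k + PI * lam - - (PI / 2)) in H by ring.
  eapply is_series_ext; [|exact (lerch_cos_pairs _ _ _ _ _ _ H)].
  intros n. apply cos_pair_odd.
Qed.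

Theorem corollary4p8 (lam x : R) (m : nat) :
  0 < lam < 1 -> lam <> / 2 ->
  (forall k : Z, x <> IZR k) ->
  (2 <= m)%nat ->
  exists L : C, is_H lam x m L /\ L <> RtoC 0.
Proof.
  intros Hlam Hhalf Hx Hm.
  destruct (ex_zseries_lerch_cos lam x 0 m Hx Hm) as [a Ha].
  destruct (ex_zseries_lerch_cos lam x (PI / 2) m Hx Hm) as [b Hb].
  exists (a, b). split; [exact (is_H_components lam x m a b Hx Ha Hb)|].
  intros Hab. injection Hab as -> ->.
  assert (Hrot : forall theta, is_zseries (lerch_cos lam x theta m) 0).
  { intros theta. replace 0 with (cos theta * 0 + sin theta * 0) by ring.
    eapply is_zseries_ext; [intros n; symmetry; apply lerch_cos_rotate|].
    exact (is_zseries_lin _ _ _ _ _ _ Ha Hb). }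
  destruct (int_frac_decomposition x Hx) as (k & y & -> & Hy).
  pose proof PI_RGT_0.
  assert (Hphi : 0 < PI * lam < PI) by (split; nra).
  destruct (Nat.Even_or_Odd m) as [Heven | Hodd].
  - apply (is_series_cos_odd_weighted_neq0 (lerch_weight y m) (PI * lam) 0);
      [exact Hphi | | | | | reflexivity].
    + intros E. apply Hhalf. apply (Rmult_eq_reg_l PI); [|lra]. rewrite E. field.
    + intros n. apply odd_weight_nonneg. intros j. apply lerch_weight_nonneg, Hy.
    + intros n. apply odd_weight_lerch_weight_decr; assumption.
    + apply (is_series_lerch_even lam y k m 0 Heven), Hrot.
  - apply (Rlt_irrefl 0), (is_series_sin_odd_weighted_pos (lerch_weight y m) (PI * lam) 0 Hphi).
    + intros n. apply lerch_weight_nonneg, Hy.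
    + intros n. apply lerch_weight_decr; [exact Hy | lia].
    + apply (is_series_lerch_odd lam y k m 0 Hodd), Hrot.
Qed.
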